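(* Let $\mu>0$ and consider the parametric multistage setting of the context. Assume that the noises $\mathbf{W}_1,\dots,\mathbf{W}_T$ are independent with finite supports and that there exists a compact set $\mathcal{P}\subset\mathbb{P}$ such that, for all $t\in\{0,\dots,T-1\}$ and all $w\in\mathrm{Supp}(\mathbf{W}_{t+1})$, $\mathrm{dom}\,L_t(x,u,w,\cdot)\subset\mathcal{P}$ for all $(x,u)\in\mathbb{X}\times\mathbb{U}$, and $\mathrm{dom}\,K(x,\cdot)\subset\mathcal{P}$ for all $x\in\mathbb{X}$. Then: 1. for all $t\in\{0,\dots,T-1\}$ and all $w\in\mathrm{Supp}(\mathbf{W}_{t+1})$, if $L_t(\cdot,\cdot,w,\cdot)\in\Gamma_{\mathcal{K}}[\mathbb{X}\times\mathbb{U},\mathbb{P}]$, then $L^\mu_t(\cdot,\cdot,w,\cdot)\in\Theta_{\mathcal{K}}[\mathbb{X}\times\mathbb{U},\mathbb{P}]$; 2. if $K\in\Gamma[\mathbb{X},\mathbb{P}]$, then $K^\mu\in\Theta[\mathbb{X},\mathbb{P}]$.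
   Context: $T\ge1$; $\mathbb{X}=\mathbb{R}^{n_x}$, $\mathbb{U}=\mathbb{R}^{n_u}$, $\mathbb{W}=\mathbb{R}^{n_w}$, $\mathbb{P}=\mathbb{R}^{n_p}$; $\mathbf{W}_1,\dots,\mathbf{W}_T$ are $\mathbb{W}$-valued random variables, $\mathrm{Supp}$ denotes the set of values taken with positive probability; $L_t:\mathbb{X}\times\mathbb{U}\times\mathbb{W}\times\mathbb{P}\to\,]-\infty,+\infty]$ ($t=0,\dots,T-1$) and $K:\mathbb{X}\times\mathbb{P}\to\,]-\infty,+\infty]$ are given cost functions; $\mathrm{dom}\,g=\{g<+\infty\}$. Parametric Moreau envelopes: $L^\mu_t(x,u,w,p)=\inf_{p'\in\mathbb{P}}\big(L_t(x,u,w,p')+\frac{1}{2\mu}\|p-p'\|_2^2\big)$ and $K^\mu(x,p)=\inf_{p'\in\mathbb{P}}\big(K(x,p')+\frac{1}{2\mu}\|p-p'\|_2^2\big)$. Function classes: for a Euclidean space $\mathbb{Y}$, $\Gamma[\mathbb{Y},\mathbb{P}]$ is the set of lower semicontinuous convex functions $\mathbb{Y}\times\mathbb{P}\to\,]-\infty,+\infty]$. For $\mathcal{Q}\subset\mathbb{P}$, $\Theta[\mathbb{Y},\mathcal{Q}]$ is the set of $\theta\in\Gamma[\mathbb{Y},\mathbb{P}]$ with $\mathrm{dom}\,\theta=Y_\theta\times\mathcal{Q}$ for some (possibly empty) $Y_\theta\subset\mathbb{Y}$ and such that $\theta(y,\cdot)$ is differentiable on $\mathrm{int}\,\mathcal{Q}$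 for each $y\in Y_\theta$. $\Gamma_{\mathcal{K}}[\mathbb{X}\times\mathbb{U},\mathbb{P}]$ is the set of $\gamma\in\Gamma[\mathbb{X}\times\mathbb{U},\mathbb{P}]$ for which some compact $\mathcal{K}_\gamma\subset\mathbb{U}$ satisfies $\mathrm{dom}\,\gamma(x,\cdot,p)\subset\mathcal{K}_\gamma$ for all $(x,p)$; $\Theta_{\mathcal{K}}[\mathbb{X}\times\mathbb{U},\mathcal{Q}]=\Theta[\mathbb{X}\times\mathbb{U},\mathcal{Q}]\cap\Gamma_{\mathcal{K}}[\mathbb{X}\times\mathbb{U},\mathbb{P}]$. *)

From HB Require Import structures.
From mathcomp Require Import all_boot all_order all_algebra.
From mathcomp Require Import all_classical all_reals all_analysis.
Set Implicit Arguments. Unset Strict Implicit. Unset Printing Implicit Defensive.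
Import Order.TTheory GRing.Theory Num.Theory.
Import numFieldNormedType.Exports.
Local Open Scope classical_set_scope.
Local Open Scope ring_scope.

Section Defs.
Variable R : realType.

Definition sqnorm2 (n : nat) (v : 'rV[R]_n) : R := \sum_(i < n) (v ord0 i) ^+ 2.

Definition edom (T : Type) (g : T -> \bar R) : set T := [set z | (g z < +oo)%E].

Definition no_minfty (T : Type) (g : T -> \bar R) : Prop := forall z, g z <> -oo%E.

Definition elsc (T : topologicalType) (g : T -> \bar R) : Prop :=
  forall z (r : R), (r%:E < g z)%E -> \forall z' \near z, (r%:E < g z')%E.

Definition econvex (V : lmodType R) (g : V -> \bar R) : Prop :=
  forall (a b : V) (l : R), 0 < l < 1 ->
    (g (l *: a + (1 - l) *: b)%R <= l%:E * g a + (1 - l)%:E * g b)%E.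

Definition GammaF (Y P : normedModType R) (g : Y * P -> \bar R) : Prop :=
  no_minfty g /\ elsc g /\ econvex g.

Definition ThetaF (Y P : normedModType R) (Q : set P) (g : Y * P -> \bar R)
  : Prop :=
  GammaF g /\
  exists Yg : set Y, edom g = Yg `*` Q /\
    forall y, Yg y -> forall p, interior Q p ->
      differentiable (fun p' => fine (g (y, p'))) p.

Definition GammaKF (X U P : normedModType R) (g : (X * U) * P -> \bar R)
  : Prop :=
  GammaF g /\ exists KU : set U, compact KU /\
    forall x p, [set u | (g ((x, u), p) < +oo)%E] `<=` KU.

Definition ThetaKF (X U P : normedModType R) (Q : set P)
  (g : (X * U) * P -> \bar R) : Prop :=
  ThetaF Q g /\ GammaKF g.

Definition moreau (A : Type) (np : nat) (mu : R) (g : A -> 'rV[R]_np -> \bar R)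
  (a : A) (p : 'rV[R]_np) : \bar R :=
  ereal_inf (range (fun p' => (g a p' + ((2 * mu)^-1 * sqnorm2 (p - p'))%:E)%E)).

Definition supp (d : measure_display) (Om : measurableType d)
  (P : probability Om R) (V : Type) (Z : Om -> V) : set V :=
  [set w | (0 < P (Z @^-1` [set w]))%E].

End Defs.

From HB Require Import structures.
From mathcomp Require Import all_boot all_order all_algebra.
From mathcomp Require Import all_classical all_reals all_analysis.
From mathcomp Require Import ring lra.
Import Order.TTheory GRing.Theory Num.Theory.
Import numFieldNormedType.Exports.
Local Open Scope classical_set_scope.
Local Open Scope ring_scope.

(* The envelope m(a, p) = inf_q g(a, q) + |p - q|^2 / (2 mu) is an infimum
   over the compact set Pc, outside of which g = +oo, of a jointly lower
   semicontinuous function of (q, a, p): compactness makes m lower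
   semicontinuous and makes the infimum attained whenever g(a, .) is not
   identically +oo.  Joint convexity of (a, p, q) |-> g(a, q) + |p - q|^2/(2 mu)
   makes m convex.  If q is a minimizer for (a, p), testing the same q at
   p + h gives m(a, p + h) <= m(a, p) + <(p - q) / mu, h> + |h|^2 / (2 mu);
   combined with midpoint convexity in p, m(a, .) is squeezed between two
   functions tangent at p and is therefore differentiable there.  Finiteness
   of m(a, p) depends only on a, so the domain of m is a product with the
   whole parameter space, and any compact bound on the controls carries
   over. *)

Section ExtendedRealFunctions.
Context {R : realType}.

Lemma lte_exists_fin [x y : \bar R] :
  (x < y)%E -> exists r : R, (x < r%:E)%E /\ (r%:E < y)%E.
Proof.
case: x => [x| |]; case: y => [y| |] //=.
- rewrite lte_fin => xy; exists ((x + y) / 2); rewrite !lte_fin; split; lra.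
- by move=> _; exists (x + 1); rewrite !lte_fin ltry; split => //; lra.
- by move=> _; exists (y - 1); rewrite !lte_fin ltNyr; split => //; lra.
- by move=> _; exists 0; rewrite ltNyr ltry.
Qed.

Lemma pmulEFin_neqNy (l : R) (x : \bar R) :
  0 < l -> x != -oo%E -> (l%:E * x)%E != -oo%E.
Proof.
by move=> l_gt0; case: x => [r| |] // _; rewrite muleC gt0_mulye ?lte_fin.
Qed.

Lemma elsc_comp (T U : topologicalType) (f : U -> \bar R) (h : T -> U) :
  elsc f -> continuous h -> elsc (f \o h).
Proof. by move=> f_lsc h_cont z r /f_lsc; apply: h_cont. Qed.

Lemma elscD (T : topologicalType) (f : T -> \bar R) (k : T -> R) :
  elsc f -> continuous k -> elsc (fun z => f z + (k z)%:E)%E.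
Proof.
move=> f_lsc k_cont z r.
rewrite -lteBlDr // -EFinB => /lte_exists_fin[s [k_s s_f]].
have near_f := f_lsc z s s_f.
have near_k : \forall z' \near z, r - s < k z'.
  by apply: (cvgr_gt (k z)); [exact: k_cont | move: k_s; rewrite lte_fin; lra].
near=> z'; rewrite -lteBlDr // -EFinB.
apply: lt_trans (_ : s%:E < f z')%E; last by near: z'.
by rewrite lte_fin ltrBlDl -ltrBlDr; near: z'.
Unshelve. all: by end_near. Qed.

Lemma elsc_compact_inf_attained {T : topologicalType} {f : T -> \bar R}
    {C : set T} :
  elsc f -> compact C -> C !=set0 -> exists2 x, C x & f x = ereal_inf (f @` C).
Proof.
move=> f_lsc C_compact [x0 Cx0]; set m := ereal_inf (f @` C).
suff [x Cx fx_le] : exists2 x, C x & (f x <= m)%E.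
  by exists x => //; apply/le_anti; rewrite fx_le ereal_inf_lbound //; exists x.
have [m_lt|] := ltP m +oo%E; last first.
  by rewrite leye_eq => /eqP ->; exists x0 => //; rewrite leey.
apply: contrapT => no_min.
have m_lt_f x : C x -> (m < f x)%E.
  by move=> Cx; rewrite ltNge; apply/negP => fx_le; apply: no_min; exists x.
(* Near-covering compactness along the filter of reals decreasing to [m]
   yields some [r > m] lying below [f] on all of [C]. *)
pose F := filter_from [set r0 : R | (m < r0%:E)%E]
  (fun r0 => [set r : R | (m < r%:E)%E /\ r < r0]).
have F_filter : Filter F.
  apply: filter_from_filter.
    by have [r0 [? _]] := lte_exists_fin m_lt; exists r0.
  move=> i j mi mj; exists (Order.min i j).
    by rewrite /= EFin_min lt_min mi.
  by move=> r [mr]; rewrite lt_min => /andP[ri rj].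
have [x Cx|r0 m_r0 f_above] := (compact_near_coveringP C).1 C_compact R F
  (fun r x => (r%:E < f x)%E) F_filter.
  have [r0 [m_r0 r0_f]] := lte_exists_fin (m_lt_f x Cx).
  exists ([set x' | (r0%:E < f x')%E], [set r : R | (m < r%:E)%E /\ r < r0]).
    by split; [exact: f_lsc | exists r0].
  by move=> [x' r] /= [r0_fx' [_ r_r0]]; apply: lt_trans r0_fx'; rewrite lte_fin.
have [r [m_r r_r0]] := lte_exists_fin m_r0.
suff : (r%:E <= m)%E by rewrite leNgt m_r.
by apply: le_ereal_inf_tmp => _ [x Cx <-]; exact/ltW/(f_above r (conj m_r r_r0)).
Qed.

Lemma elsc_ereal_inf_compact {T Z : topologicalType} {F : T -> Z -> \bar R}
    {C : set T} :
  compact C -> elsc (fun w : T * Z => F w.1 w.2) ->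
  elsc (fun z => ereal_inf ((F ^~ z) @` C)).
Proof.
move=> C_compact F_lsc z0 r /lte_exists_fin[s [r_s s_inf]].
have : \forall z \near z0, C `<=` (fun x => (s%:E < F x z)%E).
  apply: (compact_near_coveringP C).1 C_compact _ _ _ _ _ => // x Cx.
  apply: (F_lsc (x, z0)); apply: lt_le_trans s_inf _.
  by apply: ereal_inf_lbound; exists x.
apply: filterS => z s_F; apply: lt_le_trans r_s _.
by apply: le_ereal_inf_tmp => _ [x Cx <-]; exact/ltW/s_F.
Qed.

End ExtendedRealFunctions.

Section QuadraticRemainder.
Variables (R : realType) (V : normedModType R).

Lemma differentiable_quadratic_remainder (W : normedModType R) (f : V -> W)
    (df : {linear V -> W}) x (C : R) :
  continuous df -> (forall h, `|f (h + x) - f x - df h| <= C * `|h| ^+ 2) ->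
  differentiable f x.
Proof.
move=> df_cont remainder; apply/diffP => /=.
apply: (@getPex _ (fun df : {linear V -> W} => continuous df /\
  forall y, f y = f (lim (nbhs x)) + df (y - lim (nbhs x))
                  +o_(y \near x) (y - lim (nbhs x)))).
exists df; split => //; rewrite lim_id // => y.
suff expansion : f = (cst (f x) + df) \o center x +o_x (center x).
  exact: (congr1 (fun h => h y) expansion).
apply/eqaddoP => eps eps_gt0.
have k_gt0 : 0 < eps / (`|C| + 1) by rewrite divr_gt0 // ltr_wpDl.
near=> z.
have -> : (f - ((cst (f x) + df) \o center x)) z =
    f (z - x + x) - f x - df (z - x).
  by rewrite subrK !fctE opprD addrA.
apply: le_trans (remainder (z - x)) _.
have : `|z - x| < eps / (`|C| + 1).
  near: z; apply: filterS (cvgr_dist_lt id x cvg_id _ k_gt0) => z.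
  by rewrite distrC.
rewrite ltr_pdivlMr ?ltr_wpDl // => small.
have := ler_norm C; have := normr_ge0 (z - x); nra.
Unshelve. all: by end_near. Qed.

Lemma differentiable_midconvex_quadratic_majorant (f : V -> R)
    (df : {linear V -> R}) x (C : R) :
  continuous df ->
  (forall h, f x <= (f (h + x) + f (- h + x)) / 2) ->
  (forall h, f (h + x) <= f x + df h + C * `|h| ^+ 2) ->
  differentiable f x.
Proof.
move=> df_cont midconvex majorant.
apply: (@differentiable_quadratic_remainder _ _ df _ C) => // h.
have := majorant (- h); rewrite linearN normrN => majorantN.
have := midconvex h; have := majorant h.
rewrite ler_norml; lra.
Qed.

End QuadraticRemainder.

Section SquaredEuclideanNorm.
Variables (R : realType) (n : nat).
Implicit Types u v : 'rV[R]_n.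

Lemma sqnorm2_convex u v (l : R) : 0 <= l <= 1 ->
  sqnorm2 (l *: u + (1 - l) *: v) <= l * sqnorm2 u + (1 - l) * sqnorm2 v.
Proof.
move=> /andP[l_ge0 l_le1]; rewrite /sqnorm2 !mulr_sumr -big_split.
apply: ler_sum => i _ /=; rewrite !mxE.
have : 0 <= l * (1 - l) * (u ord0 i - v ord0 i) ^+ 2.
  by rewrite mulr_ge0 ?sqr_ge0 // mulr_ge0 // subr_ge0.
nra.
Qed.

Lemma sqnorm2_le_norm u : sqnorm2 u <= n%:R * `|u| ^+ 2.
Proof.
have -> : n%:R * `|u| ^+ 2 = \sum_(i < n) `|u| ^+ 2.
  by rewrite sumr_const card_ord mulr_natl.
apply: ler_sum => i _.
rewrite -real_normK ?num_real // lerXn2r ?nnegrE //.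
by rewrite [`|u|]mx_normrE; exact: (le_bigmax _ _ (ord0, i)).
Qed.

Lemma continuous_sqnorm2 : continuous (@sqnorm2 R n).
Proof.
apply: continuous_big; first exact: add_continuous.
by move=> i _ u; apply: continuousM; exact: coord_continuous.
Qed.

End SquaredEuclideanNorm.

Definition dotr {R : realType} {n} (u v : 'rV[R]_n) : R :=
  \sum_(i < n) u ord0 i * v ord0 i.

Lemma dotr_is_linear (R : realType) n (u : 'rV[R]_n) :
  linear_for *:%R (dotr u).
Proof.
move=> a v w; rewrite /dotr scaler_sumr -big_split; apply: eq_bigr => i _ /=.
by rewrite !mxE -[a *: _]/(a * _); ring.
Qed.

HB.instance Definition _ (R : realType) n (u : 'rV[R]_n) :=
  GRing.isLinear.Build R 'rV[R]_n R *:%R (dotr u) (@dotr_is_linear R n u).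

Lemma continuous_dotr (R : realType) n (u : 'rV[R]_n) : continuous (dotr u).
Proof.
apply: continuous_big; first exact: add_continuous.
move=> i _ v; apply: continuousM; first exact: cst_continuous.
exact: coord_continuous.
Qed.

Lemma dotrZl (R : realType) n a (u v : 'rV[R]_n) :
  dotr (a *: u) v = a * dotr u v.
Proof. by rewrite /dotr mulr_sumr; apply: eq_bigr => i _; rewrite mxE mulrA. Qed.

Lemma sqnorm2D (R : realType) n (u v : 'rV[R]_n) :
  sqnorm2 (u + v) = sqnorm2 u + 2 * dotr u v + sqnorm2 v.
Proof.
rewrite /sqnorm2 /dotr mulr_sumr -!big_split; apply: eq_bigr => i _ /=.
by rewrite mxE; ring.
Qed.

Section MoreauEnvelope.
Context {R : realType} {A : normedModType R} {n : nat} {mu : R}.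
Hypothesis mu_gt0 : 0 < mu.
Context {g : A -> 'rV[R]_n -> \bar R}.
Hypothesis g_Gamma : GammaF (fun z : A * 'rV[R]_n => g z.1 z.2).
Context {Pc : set 'rV[R]_n}.
Hypothesis Pc_compact : compact Pc.
Hypothesis edom_g : forall a, edom (g a) `<=` Pc.

Let penalty (v : 'rV[R]_n) : R := (2 * mu)^-1 * sqnorm2 v.
Let psi a p q : \bar R := (g a q + (penalty (p - q))%:E)%E.

Let g_neqNy a q : g a q != -oo%E.
Proof. by apply/eqP; exact: g_Gamma.1 (a, q). Qed.

Let g_pinfty a q : ~ Pc q -> g a q = +oo%E.
Proof.
move=> Pc'q; apply/eqP; rewrite -leye_eq leNgt.
by apply: contra_notN Pc'q => /edom_g.
Qed.

Let continuous_penalty : continuous penalty.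
Proof.
move=> v; apply: (@continuousM _ _ (fun=> (2 * mu)^-1) (@sqnorm2 R n)).
  exact: cst_continuous.
exact: continuous_sqnorm2.
Qed.

Let penalty_convex u v (l : R) : 0 <= l <= 1 ->
  penalty (l *: u + (1 - l) *: v) <= l * penalty u + (1 - l) * penalty v.
Proof.
move=> l01; rewrite /penalty mulrCA [X in _ <= _ + X]mulrCA -mulrDr.
by rewrite ler_wpM2l ?sqnorm2_convex // invr_ge0 mulr_ge0 // ltW.
Qed.

Let penalized_lsc :
  elsc (fun w : 'rV[R]_n * (A * 'rV[R]_n) => psi w.2.1 w.2.2 w.1).
Proof.
apply: (@elscD _ _ ((fun z : A * 'rV[R]_n => g z.1 z.2) \o
    (fun w : 'rV[R]_n * (A * 'rV[R]_n) => (w.2.1, w.1)))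
  (fun w => penalty (w.2.2 - w.1))).
  apply: elsc_comp g_Gamma.2.1 _ => w.
  apply: (@cvg_pair _ _ _ (nbhs w) (nbhs w.2.1) (nbhs w.1)); last exact: cvg_fst.
  by apply: (@continuous_comp _ _ _ snd fst); [exact: cvg_snd | exact: cvg_fst].
move=> w.
have diff_cont :
    {for w, continuous (fun w : 'rV[R]_n * (A * 'rV[R]_n) => w.2.2 - w.1)}.
  apply: (@cvgB _ _ _ (nbhs w) _ (fun w => w.2.2) fst); last exact: cvg_fst.
  by apply: (@continuous_comp _ _ _ snd snd); exact: cvg_snd.
exact: continuous_comp diff_cont (continuous_penalty _).
Qed.

Let psi_lsc a p : elsc (psi a p).
Proof.
apply: (@elsc_comp _ _ _ _ (fun q => (q, (a, p))) penalized_lsc) => q.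
apply: (@cvg_pair _ _ _ (nbhs q) (nbhs q) (nbhs (a, p))).
  exact: cvg_id.
exact: cvg_cst.
Qed.

Let g_lty_of_psi a p q : (psi a p q < +oo)%E -> (g a q < +oo)%E.
Proof.
by move=> psi_lt; rewrite ltey; apply: contraTneq psi_lt; rewrite /psi => ->.
Qed.

Lemma moreau_le a p q : (moreau mu g a p <= psi a p q)%E.
Proof. by apply: ereal_inf_lbound; exists q. Qed.

Lemma moreauE_compact a p : moreau mu g a p = ereal_inf (psi a p @` Pc).
Proof.
apply/le_anti/andP; split.
  by apply: ereal_inf_le_tmp => _ [q _ <-]; exists q.
apply: le_ereal_inf_tmp => _ [q _ <-].
have [Pcq|Pc'q] := pselect (Pc q); first by apply: ereal_inf_lbound; exists q.
by rewrite /= g_pinfty // addye // leey.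
Qed.

Lemma moreau_attained a p q0 : (g a q0 < +oo)%E ->
  exists q, moreau mu g a p = psi a p q /\ g a q \is a fin_num.
Proof.
move=> g_q0; have Pc_q0 : Pc q0 by exact: edom_g g_q0.
have [q Pcq min_q] :=
  elsc_compact_inf_attained (psi_lsc a p) Pc_compact (ex_intro _ q0 Pc_q0).
rewrite moreauE_compact -min_q; exists q; split => //.
rewrite fin_numE g_neqNy -ltey; apply: (@g_lty_of_psi _ p).
rewrite min_q -moreauE_compact; apply: le_lt_trans (moreau_le a p q0) _.
by rewrite lte_add_pinfty ?ltry.
Qed.

Lemma moreau_cases a p : moreau mu g a p = +oo%E \/
  exists q, moreau mu g a p = psi a p q /\ g a q \is a fin_num.
Proof.
have [[q0 g_q0]|dom_empty] := pselect (exists q0, (g a q0 < +oo)%E).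
  by right; exact: moreau_attained g_q0.
left; apply/ereal_inf_pinfty => _ [q _ <-] /=.
suff -> : g a q = +oo%E by rewrite addye.
by apply/eqP; rewrite -leye_eq leNgt; apply: contra_notN dom_empty => ?; exists q.
Qed.

Lemma moreau_neqNy a p : moreau mu g a p != -oo%E.
Proof.
have [->//|[q [-> g_q]]] := moreau_cases a p.
by rewrite /psi -(fineK g_q).
Qed.

Lemma moreau_lty a p : (moreau mu g a p < +oo)%E <-> exists q, (g a q < +oo)%E.
Proof.
split; first by move=> /ereal_inf_lt[_ [q _ <-]] /g_lty_of_psi; exists q.
move=> [q g_q]; apply: le_lt_trans (moreau_le a p q) _.
by rewrite lte_add_pinfty ?ltry.
Qed.

Lemma moreau_fin_num a p :
  (exists q, (g a q < +oo)%E) -> moreau mu g a p \is a fin_num.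
Proof. by move=> /(moreau_lty a p) m_lt; rewrite fin_numE moreau_neqNy -ltey. Qed.

Lemma moreau_lsc : elsc (fun z : A * 'rV[R]_n => moreau mu g z.1 z.2).
Proof.
have -> : (fun z : A * 'rV[R]_n => moreau mu g z.1 z.2) =
    (fun z => ereal_inf ((fun q => psi z.1 z.2 q) @` Pc)).
  by apply/funext => z; rewrite moreauE_compact.
exact: (@elsc_ereal_inf_compact _ _ _ (fun q z => psi z.1 z.2 q) _
  Pc_compact penalized_lsc).
Qed.

Lemma moreau_convex : econvex (fun z : A * 'rV[R]_n => moreau mu g z.1 z.2).
Proof.
move=> [a1 p1] [a2 p2] l l01 /=; have /andP[l_gt0 l_lt1] := l01.
have l'_gt0 : 0 < 1 - l by rewrite subr_gt0.
have [m1|[q1 [m1 g_q1]]] := moreau_cases a1 p1.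
  rewrite m1 [X in (X + _)%E]muleC gt0_mulye ?lte_fin // addye ?leey //.
  exact: pmulEFin_neqNy (moreau_neqNy _ _).
have [m2|[q2 [m2 g_q2]]] := moreau_cases a2 p2.
  rewrite m2 [X in (_ + X)%E]muleC gt0_mulye ?lte_fin // addey ?leey //.
  exact: pmulEFin_neqNy (moreau_neqNy _ _).
rewrite m1 m2.
set q := l *: q1 + (1 - l) *: q2.
apply: le_trans (moreau_le _ _ q) _.
have g_convex := g_Gamma.2.2 (a1, q1) (a2, q2) l l01.
have penalty_le : penalty (l *: p1 + (1 - l) *: p2 - q) <=
    l * penalty (p1 - q1) + (1 - l) * penalty (p2 - q2).
  have -> : l *: p1 + (1 - l) *: p2 - q = l *: (p1 - q1) + (1 - l) *: (p2 - q2).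
    by rewrite !scalerBr opprD !addrA; congr (_ - _); rewrite addrAC.
  by apply: penalty_convex; rewrite !ltW.
rewrite /psi /= -(fineK g_q1) -(fineK g_q2) in g_convex *.
apply: le_trans (leeD g_convex (lexx (penalty _)%:E)) _.
by rewrite -!EFinM -!EFinD lee_fin; lra.
Qed.

Lemma moreau_majorant a p q h :
  moreau mu g a p = psi a p q -> g a q \is a fin_num ->
  fine (moreau mu g a (h + p)) <=
    fine (moreau mu g a p) + dotr (mu^-1 *: (p - q)) h + penalty h.
Proof.
move=> m_p g_q.
have dom_a : exists q, (g a q < +oo)%E.
  by exists q; move: g_q; rewrite fin_numE ltey => /andP[].
rewrite -lee_fin !EFinD !fineK ?moreau_fin_num // m_p.
apply: le_trans (moreau_le a (h + p) q) _.
rewrite /psi -(fineK g_q) -!EFinD lee_fin /penalty.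
rewrite [h + p]addrC addrAC sqnorm2D dotrZl.
rewrite le_eqVlt; apply/orP; left; apply/eqP; field.
by rewrite gt_eqF.
Qed.

Lemma moreau_differentiable a p : (exists q, (g a q < +oo)%E) ->
  differentiable (fun p' => fine (moreau mu g a p')) p.
Proof.
move=> dom_a; have [q0 g_q0] := dom_a.
have [q [m_p g_q]] := moreau_attained a p q0 g_q0.
apply: (@differentiable_midconvex_quadratic_majorant _ _ _
  (dotr (mu^-1 *: (p - q))) _ ((2 * mu)^-1 * n%:R)).
- exact: continuous_dotr.
- move=> h.
  have half_01 : 0 < (2^-1 : R) < 1 by apply/andP; split; lra.
  have := moreau_convex (a, h + p) (a, - h + p) (2^-1) half_01 => /=.
  have -> : 2^-1 *: a + (1 - 2^-1) *: a = a.
    by rewrite -scalerDl addrC subrK scale1r.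
  have -> : 2^-1 *: (h + p) + (1 - 2^-1) *: (- h + p) = p.
    by apply/rowP => i; rewrite !mxE; field.
  move=> midpoint.
  rewrite -(fineK (moreau_fin_num a p dom_a))
    -(fineK (moreau_fin_num a (h + p) dom_a))
    -(fineK (moreau_fin_num a (- h + p) dom_a)) -!EFinM -!EFinD lee_fin
    in midpoint.
  lra.
- move=> h; apply: le_trans (moreau_majorant _ _ _ h m_p g_q) _.
  rewrite lerD2l /penalty -mulrA ler_wpM2l ?sqnorm2_le_norm //.
  by rewrite invr_ge0 mulr_ge0 // ltW.
Qed.

Lemma moreau_GammaF : GammaF (fun z : A * 'rV[R]_n => moreau mu g z.1 z.2).
Proof.
split; first by move=> z; apply/eqP; exact: moreau_neqNy.
by split; [exact: moreau_lsc | exact: moreau_convex].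
Qed.

Lemma moreau_ThetaF : ThetaF setT (fun z : A * 'rV[R]_n => moreau mu g z.1 z.2).
Proof.
split; first exact: moreau_GammaF.
exists [set a | exists q, (g a q < +oo)%E]; split.
  by apply/seteqP; split => -[a p]; rewrite /edom /= moreau_lty // => -[].
by move=> a dom_a p _; exact: moreau_differentiable.
Qed.

End MoreauEnvelope.

Lemma moreau_ThetaKF {R : realType} {X U : normedModType R} {n} {mu : R}
    {g : X * U -> 'rV[R]_n -> \bar R} {Pc : set 'rV[R]_n} :
  0 < mu -> compact Pc -> (forall xu, edom (g xu) `<=` Pc) ->
  GammaKF (fun z : (X * U) * 'rV[R]_n => g z.1 z.2) ->
  ThetaKF setT (fun z : (X * U) * 'rV[R]_n => moreau mu g z.1 z.2).
Proof.
move=> mu_gt0 Pc_compact edom_g [g_Gamma [KU [KU_compact dom_u]]].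
split; first exact: (moreau_ThetaF mu_gt0 g_Gamma Pc_compact edom_g).
split; first exact: (moreau_GammaF mu_gt0 g_Gamma Pc_compact edom_g).
exists KU; split => // x p u /= /moreau_lty[q g_q].
exact: dom_u g_q.
Qed.

Theorem lemma1 (R : realType) (T nx nu nw np : nat) (mu : R)
  (d : measure_display) (Om : measurableType d) (P : probability Om R)
  (W : nat -> Om -> 'rV[R]_nw)
  (L : nat -> 'rV[R]_nx -> 'rV[R]_nu -> 'rV[R]_nw -> 'rV[R]_np -> \bar R)
  (K : 'rV[R]_nx -> 'rV[R]_np -> \bar R) :
  (1 <= T)%N ->
  0 < mu ->
  (* W_1, ..., W_T are random variables with finite supports *)
  (forall t, (1 <= t <= T)%N -> forall w, measurable (W t @^-1` [set w])) ->
  (forall t, (1 <= t <= T)%N -> finite_set (supp P (W t))) ->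
  (forall t, (1 <= t <= T)%N -> P (W t @^-1` supp P (W t)) = 1%E) ->
  (* W_1, ..., W_T are independent *)
  (forall a : nat -> 'rV[R]_nw,
     P [set om | forall t, (1 <= t <= T)%N -> W t om = a t] =
     (\prod_(1 <= t < T.+1) P (W t @^-1` [set a t]))%E) ->
  (* compactness of the parameter domains *)
  (exists Pc : set 'rV[R]_np, compact Pc /\
     (forall t, (t < T)%N -> forall w, supp P (W t.+1) w ->
        forall x u, edom (L t x u w) `<=` Pc) /\
     (forall x, edom (K x) `<=` Pc)) ->
  (forall t, (t < T)%N -> forall w, supp P (W t.+1) w ->
     GammaKF (fun z : ('rV[R]_nx * 'rV[R]_nu) * 'rV[R]_np =>
                L t z.1.1 z.1.2 w z.2) ->
     ThetaKF setT (fun z : ('rV[R]_nx * 'rV[R]_nu) * 'rV[R]_np =>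
                moreau mu (fun xu p' => L t xu.1 xu.2 w p') z.1 z.2)) /\
  (GammaF (fun z : 'rV[R]_nx * 'rV[R]_np => K z.1 z.2) ->
   ThetaF setT (fun z : 'rV[R]_nx * 'rV[R]_np => moreau mu K z.1 z.2)).
Proof.
move=> _ mu_gt0 _ _ _ _ [Pc [Pc_compact [edom_L edom_K]]].
split=> [t t_lt w w_supp|K_Gamma].
  by apply: (moreau_ThetaKF mu_gt0 Pc_compact) => xu; exact: edom_L.
exact: (moreau_ThetaF mu_gt0 K_Gamma Pc_compact edom_K).
Qed.
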